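(* Let $\Lambda=(V,\pi,v,\le)$ be a bi-colored weighted ordered vertex with $r(\Lambda)=2$ and $|V_\bullet|=1$, identify $V=\{1,\dots,l\}$ via $\le$, and suppose $s(\Lambda)\ne0$. Then: if $\pi(1)=\circ$, $\pi(2)=\bullet$ and $\pi(i)=\circ$ for all $i\ge3$, then $s(\Lambda)=(-1)^l$; if $\pi(1)=\bullet$ and $\pi(i)=\circ$ for all $i\ge2$, then $s(\Lambda)=(-1)^{l-1}$.
   Context: A bi-colored weighted ordered vertex is $\Lambda=(V,\pi,v,\le)$ with $V$ a finite set, $\pi\colon V\to\{\bullet,\circ\}$, $v\colon V\to\mathbb{Z}_{\ge1}$, $\le$ a total order on $V$. Put $V_\bullet=\pi^{-1}(\bullet)$, $V_\circ=\pi^{-1}(\circ)$, $r(\Lambda)=\sum_{i\in V_\bullet}v(i)$; $v_i=(v(i),0)$ if $i\in V_\bullet$, $v_i=(0,v(i))$ if $i\in V_\circ$. For $(r,n)\in\mathbb{Z}_{\ge0}^2\setminus\{0\}$ let $\mu(r,n)=n/r\in\mathbb{Q}\cup\{\infty\}$ ($\infty$ if $r=0$). For vectors $w_1,\dots,w_l$ define $s_l(w_1,\dots,w_l)=(-1)^k$ if for each $i=1,\dots,l-1$ either (a) $\mu(w_i)>\mu(w_{i+1})$ and $\mu(w_1+\dots+w_i)\ge\mu(w_{i+1}+\dots+w_l)$, or (b) $\mu(w_i)\le\mu(w_{i+1})$ and $\mu(w_1+\dots+w_i)<\mu(w_{i+1}+\dots+w_l)$, where $k$ is the number of $i$ satisfying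 (b); otherwise $s_l=0$. Set $s(\Lambda)=s_l(v_1,\dots,v_l)$, $l=|V|$. *)

From mathcomp Require Import all_boot all_order all_algebra.
Set Implicit Arguments. Unset Strict Implicit. Unset Printing Implicit Defensive.
Import Order.TTheory GRing.Theory Num.Theory.

Inductive color := Black | White.  (* Black = \bullet, White = \circ *)

Definition is_black (c : color) : bool := if c is Black then true else false.

(* slope mu(r,n) = n/r, with None standing for +infinity (r = 0) *)
Definition mu (w : nat * nat) : option rat :=
  if w.1 == 0%N then None else Some ((w.2)%:R / (w.1)%:R)%R.

Definition mu_le (a b : option rat) : bool :=
  match a, b with
  | _, None => true
  | None, Some _ => false
  | Some x, Some y => (x <= y)%R
  end.
Definition mu_lt (a b : option rat) : bool := ~~ mu_le b a.

Definition vsum (s : seq (nat * nat)) : nat * nat :=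
  (\sum_(x <- s) x.1, \sum_(x <- s) x.2)%N.

(* for split index i (1 <= i <= l-1): w_i = nth (i-1), w_{i+1} = nth i *)
Definition cond_a (w : seq (nat * nat)) (i : nat) : bool :=
  mu_lt (mu (nth (0,0) w i)) (mu (nth (0,0) w i.-1)) &&
  mu_le (mu (vsum (drop i w))) (mu (vsum (take i w))).
Definition cond_b (w : seq (nat * nat)) (i : nat) : bool :=
  mu_le (mu (nth (0,0) w i.-1)) (mu (nth (0,0) w i)) &&
  mu_lt (mu (vsum (take i w))) (mu (vsum (drop i w))).

Definition s_l (w : seq (nat * nat)) : int :=
  let idx := iota 1 (size w).-1 in
  if all (fun i => cond_a w i || cond_b w i) idx
  then ((-1) ^+ count (cond_b w) idx)%R
  else 0%R.

(* bi-colored weighted ordered vertex with V = {0,...,l-1} ordered as nat *)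
Definition vec (l : nat) (pi : 'I_l -> color) (v : 'I_l -> nat) (i : 'I_l)
  : nat * nat :=
  if is_black (pi i) then (v i, 0%N) else (0%N, v i).

Definition sLam (l : nat) (pi : 'I_l -> color) (v : 'I_l -> nat) : int :=
  s_l [seq vec pi v i | i <- enum 'I_l].

Definition rLam (l : nat) (pi : 'I_l -> color) (v : 'I_l -> nat) : nat :=
  (\sum_(i < l | is_black (pi i)) v i)%N.

(** In [w = p ++ q] with [p] of
    positive rank and [q] made of rank-0 vectors, every split at or after the
    end of [p] has right-hand part and next vector of slope infinity, while the left-hand
    part has finite slope: condition (b) holds there.  With the black vertex
    first, all [l - 1] splits are of this kind.  With the black vertex second,
    the first split instead satisfies (a) and not (b): the first vector (white)
    has infinite slope, and so does the left-hand part. *)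

From mathcomp Require Import all_boot all_order all_algebra.
Import Order.TTheory GRing.Theory Num.Theory.

Set Implicit Arguments.
Unset Strict Implicit.
Unset Printing Implicit Defensive.

Definition rank0 (w : nat * nat) : bool := w.1 == 0%N.

Lemma mu_rank0 w : rank0 w -> mu w = None.
Proof. by rewrite /mu /rank0 => ->. Qed.

Lemma mu_le_infty a : mu_le a None.
Proof. by case: a. Qed.

Lemma mu_lt_infty w : (0 < w.1)%N -> mu_lt (mu w) None.
Proof. by rewrite /mu_lt /mu => /gtn_eqF ->. Qed.

Lemma mu_infty_leF w : (0 < w.1)%N -> mu_le None (mu w) = false.
Proof. by rewrite /mu => /gtn_eqF ->. Qed.

Lemma rank_vsum_cat s t : (vsum (s ++ t)).1 = ((vsum s).1 + (vsum t).1)%N.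
Proof. by rewrite /vsum big_cat. Qed.

Lemma rank_vsum_cons a s : (vsum (a :: s)).1 = (a.1 + (vsum s).1)%N.
Proof. by rewrite /vsum big_cons. Qed.

Lemma rank0_vsum s : all rank0 s -> rank0 (vsum s).
Proof.
move=> /allP rs0; apply/eqP/big1_seq => x /andP[_ /rs0 /eqP //].
Qed.

Lemma rank0_nth s i : all rank0 s -> rank0 (nth (0, 0)%N s i).
Proof.
move=> /all_nthP rs0.
by case: (ltnP i (size s)) => [/rs0 //|/(nth_default _) ->].
Qed.

Lemma cond_b_rank0_suffix w i :
  (0 < (vsum (take i w)).1)%N -> all rank0 (drop i w) -> cond_b w i.
Proof.
move=> pos_take rs0; rewrite /cond_b.
have -> : mu (nth (0, 0)%N w i) = None.
  by apply: mu_rank0; rewrite -[i]addn0 -nth_drop rank0_nth.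
by rewrite mu_le_infty (mu_rank0 (rank0_vsum rs0)) mu_lt_infty.
Qed.

Lemma cond_b_rank0_tail p q i : (0 < (vsum p).1)%N -> all rank0 q ->
  (size p <= i)%N -> cond_b (p ++ q) i.
Proof.
move=> pos_p rq0; rewrite leqNgt => /negbTE ge_i_p.
apply: cond_b_rank0_suffix; first by rewrite take_cat ge_i_p rank_vsum_cat ltn_addr.
rewrite drop_cat ge_i_p; apply/allP => x /mem_drop.
exact: (allP rq0).
Qed.

Lemma cond_b_on_iota w m n : (forall i, (m <= i)%N -> cond_b w i) ->
  all (fun i => cond_a w i || cond_b w i) (iota m n) /\
  count (cond_b w) (iota m n) = n.
Proof.
move=> cb; have cb_iota i : i \in iota m n -> cond_b w i.
  by rewrite mem_iota => /andP[/cb].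
split; first by apply/allP => i /cb_iota ->; rewrite orbT.
by rewrite (eq_in_count cb_iota) count_predT size_iota.
Qed.

Lemma s_l_black_rank0 x t : (0 < x.1)%N -> all rank0 t ->
  s_l (x :: t) = ((-1) ^+ size t)%R.
Proof.
move=> pos_x rt0; have pos_x' : (0 < (vsum [:: x]).1)%N.
  by rewrite rank_vsum_cons ltn_addr.
have [splits_ab count_b] := @cond_b_on_iota (x :: t) 1 (size t)
  (fun i => cond_b_rank0_tail pos_x' rt0 (i := i)).
by rewrite /s_l /= splits_ab count_b.
Qed.

Lemma s_l_white_black_rank0 y x t : rank0 y -> (0 < x.1)%N -> all rank0 t ->
  s_l (y :: x :: t) = ((-1) ^+ size t)%R.
Proof.
move=> y0 pos_x rt0; have pos_yx : (0 < (vsum [:: y; x]).1)%N.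
  by rewrite !rank_vsum_cons (eqP y0) add0n ltn_addr.
have [splits_ab count_b] := @cond_b_on_iota (y :: x :: t) 2 (size t)
  (fun i => cond_b_rank0_tail pos_yx rt0 (i := i)).
have split1_a : cond_a (y :: x :: t) 1.
  rewrite /cond_a /= (mu_rank0 y0) mu_lt_infty //=.
  by rewrite (@mu_rank0 (vsum [:: y])) ?mu_le_infty // rank0_vsum //= y0.
have split1_not_b : cond_b (y :: x :: t) 1 = false.
  by rewrite /cond_b /= (mu_rank0 y0) mu_infty_leF.
by rewrite /s_l /= split1_a splits_ab split1_not_b count_b.
Qed.

Lemma rank_vec_black l (pi : 'I_l -> color) v i :
  pi i = Black -> (vec pi v i).1 = v i.
Proof. by rewrite /vec => ->. Qed.

Lemma rank0_vec_white l (pi : 'I_l -> color) v i :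
  pi i = White -> rank0 (vec pi v i).
Proof. by rewrite /vec => ->. Qed.

Lemma sLam_black_first l (pi : 'I_l.+1 -> color) v :
  (forall i, 0 < v i)%N ->
  (forall i : 'I_l.+1, pi i = if val i == 0%N then Black else White) ->
  sLam pi v = ((-1) ^+ l)%R.
Proof.
move=> v_pos pi_def; rewrite /sLam enum_ordSl /= -map_comp s_l_black_rank0.
- by rewrite size_map size_enum_ord.
- by rewrite rank_vec_black ?pi_def.
by apply/allP => _ /mapP[i _ ->]; rewrite rank0_vec_white ?pi_def.
Qed.

Lemma sLam_black_second l (pi : 'I_l.+2 -> color) v :
  (forall i, 0 < v i)%N ->
  (forall i : 'I_l.+2, pi i = if val i == 1%N then Black else White) ->
  sLam pi v = ((-1) ^+ l)%R.
Proof.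
move=> v_pos pi_def; rewrite /sLam enum_ordSl /= -map_comp enum_ordSl /= -map_comp.
rewrite s_l_white_black_rank0.
- by rewrite size_map size_enum_ord.
- by rewrite rank0_vec_white ?pi_def.
- by rewrite rank_vec_black ?pi_def.
by apply/allP => _ /mapP[i _ ->]; rewrite rank0_vec_white ?pi_def.
Qed.

Theorem lemma4p9 (l : nat) (pi : 'I_l -> color) (v : 'I_l -> nat)
  (hv : forall i, (1 <= v i)%N)
  (hr : rLam pi v = 2%N)
  (hb : #|[pred i | is_black (pi i)]| = 1%N)
  (hs : sLam pi v <> 0%R) :
  ((forall i : 'I_l, pi i = if val i == 1%N then Black else White) ->
     sLam pi v = ((-1) ^+ l)%R) /\
  ((forall i : 'I_l, pi i = if val i == 0%N then Black else White) ->
     sLam pi v = ((-1) ^+ l.-1)%R).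
Proof.
have /card_gt0P[b black_b] : (0 < #|[pred i | is_black (pi i)]|)%N by rewrite hb.
split=> pi_def.
- have : (1 < l)%N.
    by move: black_b; rewrite inE pi_def; case: eqP => [<- _|//]; apply: ltn_ord.
  case: l pi v hv {hr hb hs b black_b} pi_def => [|[|l]] // pi v hv pi_def _.
  by rewrite sLam_black_second // !exprS mulrA mulrNN !mul1r.
- have : (0 < l)%N by apply: leq_ltn_trans (ltn_ord b).
  case: l pi v hv {hr hb hs b black_b} pi_def => [|l] // pi v hv pi_def _.
  exact: sLam_black_first.
Qed.
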